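(* Let $\Phi=\varphi\land\bigwedge RE\land\bigwedge DI$ be an $\mathcal{ALCQIO}_{b,Re}$-formula over $\tau$ with $RE=\{\mathit{Reach}(B_1,S_1,A_1),\dots,\mathit{Reach}(B_h,S_h,A_h)\}$, let $\mathcal{M}$ be a $\tau$-structure, $1\le h'\le h$, and let $f$ be an $h'$-useful labeling for $\mathcal{M}$. Then $\mathit{val}_f(D^{\mathcal{M}}_{h'})=0$ iff $D^{\mathcal{M}}_{h'}$ is connected, i.e. every vertex of $D^{\mathcal{M}}_{h'}$ is reachable from a vertex of $B_{h'}^{\mathcal{M}}$.
   Context: Structures are finite; $\tau$ has atomic concepts, atomic roles (a subset $\mathsf{N_F}$ functional) and nominals. $\mathcal{ALCQIO}_b$ is the description logic with concepts built from atomic concepts and nominals using $\sqcap,\sqcup,\neg,\exists r.C,\exists^{\le n}r.C$ (roles atomic or inverse) and formulae Boolean combinations of inclusions $C\sqsubseteq D$. A reachability assertion $\mathit{Reach}(B,S,A)$ has atomic concepts $A,B$ and $S\subseteq\mathsf{N_F}$; an $\mathcal{ALCQIO}_{b,Re}$-formula is $\Phi=\varphi\land\bigwedge RE\land\bigwedge DI$ with $\varphi\in\mathcal{ALCQIO}_b$, $RE$ a finite set of reachability assertions and $DI$ a finite set of disjointness assertions $A_1\sqcap A_2\equiv\bot$, compatible (whenever two assertions in $RE$ share a role, their $A$-concepts are declared disjoint in $DI$). $D^{\mathcal{M}}_{h'}$ is the directed graph on vertex set $A_{h'}^{\mathcal{M}}$ with edges $\bigcup_{s\in S_{h'}}s^{\mathcal{M}}\cap(A_{h'}^{\mathcal{M}}\times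 A_{h'}^{\mathcal{M}})$. Types: $\mathrm{Con}(\varphi)$ is the set of concepts occurring in $\varphi$ (including subconcepts), $\mathrm{TYPES}_\varphi$ its power set, $\overline{tp}^{\varphi}_{\mathcal{M}}(u)=\{C\in\mathrm{Con}(\varphi)\mid u\in C^{\mathcal{M}}\}$. An $h'$-useful labeling for $\mathcal{M}$ is $f:A_{h'}^{\mathcal{M}}\to[1,|\mathrm{TYPES}_\varphi|]$ such that (1) $f(u)=f(v)$ implies equal types, and (2) for every $u\in A_{h'}^{\mathcal{M}}$, either $u\in B_{h'}^{\mathcal{M}}$ or there are $v,w\in A_{h'}^{\mathcal{M}}$ with $f(u)=f(v)$, $f(w)<f(v)$ and $(w,v)$ an edge of $D^{\mathcal{M}}_{h'}$. A base for $D^{\mathcal{M}}_{h'}$ is a set $X\subseteq A_{h'}^{\mathcal{M}}$ from which all of $A_{h'}^{\mathcal{M}}$ is reachable in $D^{\mathcal{M}}_{h'}$. Its value is $\mathit{val}_f(X)=\sum_{x\in X\setminus B_{h'}^{\mathcal{M}}}f(x)$, and $\mathit{val}_f(D^{\mathcal{M}}_{h'})=\min\{\mathit{val}_f(X)\mid X\text{ a base for }D^{\mathcal{M}}_{h'}\}$. *)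

From HB Require Import structures.
From mathcomp Require Import all_boot.
Set Implicit Arguments. Unset Strict Implicit. Unset Printing Implicit Defensive.

(* Signature tau: atomic concepts, atomic roles and nominals are named by nat;
   the functional roles N_F are given by a predicate on role names. *)

Inductive role := RAtom of nat | RInv of nat.

Inductive concept :=
| CAtom of nat
| CNom of nat
| CNot of concept
| CAnd of concept & concept
| COr of concept & concept
| CEx of role & concept
| CAtMost of nat & role & concept.

Inductive formula :=
| FIncl of concept & concept
| FNot of formula
| FAnd of formula & formula
| FOr of formula & formula.

Definition concept_eq_dec (x y : concept) : {x = y} + {x <> y}.
Proof. decide equality; try apply (fun m n : nat => decP (@eqP nat m n)); decide equality; apply (fun m n : nat => decP (@eqP nat m n)). Defined.
HB.instance Definition _ := hasDecEq.Build concept (compareP concept_eq_dec).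

Record structure (D : finType) := Structure {
  cI : nat -> {set D};
  rI : nat -> rel D;
  nI : nat -> D
}.

Definition respects_functional (D : finType) (NF : pred nat) (M : structure D) :=
  forall r, NF r -> forall u v w, rI M r u v -> rI M r u w -> v = w.

Definition role_sem (D : finType) (M : structure D) (R : role) : rel D :=
  match R with
  | RAtom r => rI M r
  | RInv r => fun u v => rI M r v u
  end.

Fixpoint csat (D : finType) (M : structure D) (C : concept) (u : D) : bool :=
  match C with
  | CAtom a => u \in cI M a
  | CNom o => u == nI M o
  | CNot C => ~~ csat M C u
  | CAnd C1 C2 => csat M C1 u && csat M C2 u
  | COr C1 C2 => csat M C1 u || csat M C2 u
  | CEx R C => [exists v, role_sem M R u v && csat M C v]
  | CAtMost n R C => #|[set v | role_sem M R u v && csat M C v]| <= n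
  end.

Fixpoint subcon (C : concept) : seq concept :=
  C :: match C with
       | CAtom _ | CNom _ => [::]
       | CNot C1 => subcon C1
       | CAnd C1 C2 | COr C1 C2 => subcon C1 ++ subcon C2
       | CEx _ C1 | CAtMost _ _ C1 => subcon C1
       end.

Fixpoint con_raw (phi : formula) : seq concept :=
  match phi with
  | FIncl C1 C2 => subcon C1 ++ subcon C2
  | FNot p => con_raw p
  | FAnd p q | FOr p q => con_raw p ++ con_raw q
  end.
Definition Con (phi : formula) : seq concept := undup (con_raw phi).

(* |TYPES_phi| = |powerset of Con(phi)| *)
Definition nTYPES (phi : formula) : nat := 2 ^ size (Con phi).

Definition tp (D : finType) (M : structure D) (phi : formula) (u : D) : seq concept :=
  [seq C <- Con phi | csat M C u].

(* ALCQIO_{b,Re}-formulas: phi /\ /\RE /\ /\DI.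
   A reachability assertion Reach(B,S,A) is the triple (B, S, A). A
   disjointness assertion A1 [= A2 == bot is the pair (A1, A2). *)
Record reach_assertion := Reach { rB : nat; rS : seq nat; rA : nat }.
Record re_formula := REFormula {
  Fphi : formula;
  FRE : seq reach_assertion;
  FDI : seq (nat * nat)
}.

Definition dummy_reach := Reach 0 [::] 0.

Definition wf_re_formula (NF : pred nat) (Phi : re_formula) : Prop :=
  (forall i, i < size (FRE Phi) -> all NF (rS (nth dummy_reach (FRE Phi) i)))
  /\ (forall i j, i < size (FRE Phi) -> j < size (FRE Phi) -> i != j ->
        let a1 := nth dummy_reach (FRE Phi) i in
        let a2 := nth dummy_reach (FRE Phi) j in
        has (fun s => s \in rS a2) (rS a1) ->
        ((rA a1, rA a2) \in FDI Phi) || ((rA a2, rA a1) \in FDI Phi)).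

Section Graph.
Variables (D : finType) (M : structure D) (a : reach_assertion).

Definition vertD : {set D} := cI M (rA a).
Definition edgeD : rel D := fun u v =>
  [&& u \in vertD, v \in vertD & has (fun s => rI M s u v) (rS a)].

Definition is_base (X : {set D}) : bool :=
  (X \subset vertD) && [forall v in vertD, [exists x in X, connect edgeD x v]].

Definition val (f : D -> nat) (X : {set D}) : nat :=
  \sum_(x in X :\: cI M (rB a)) f x.

(* minimum value over all bases (vertD itself is a base, so the set of bases
   is nonempty and this is the true minimum) *)
Definition valD (f : D -> nat) : nat :=
  \big[minn/val f vertD]_(X : {set D} | is_base X) val f X.

Definition connectedD : Prop :=
  forall v, v \in vertD -> exists2 b, b \in vertD :&: cI M (rB a) & connect edgeD b v.
End Graph.

Definition useful_labeling (D : finType) (M : structure D) (phi : formula)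
    (a : reach_assertion) (f : D -> nat) : Prop :=
  (forall u, u \in vertD M a -> 1 <= f u <= nTYPES phi)
  /\ (forall u v, u \in vertD M a -> v \in vertD M a -> f u = f v -> tp M phi u = tp M phi v)
  /\ (forall u, u \in vertD M a ->
        u \in cI M (rB a) \/
        exists v w, [/\ v \in vertD M a, w \in vertD M a, f u = f v, f w < f v
                      & edgeD M a w v]).

(* Since the labeling is positive on the vertices, a base has value 0 exactly
   when it lies inside B^M.  So val_f(D) = 0 iff some base is contained in
   B^M, iff the vertices of B^M already form a base, i.e. D is connected from
   B^M. *)

From Pilot Require Import Defs.
From mathcomp Require Import all_boot.

Set Implicit Arguments.
Unset Strict Implicit.
Unset Printing Implicit Defensive.

Lemma bigmin_leq (I : eqType) (r : seq I) (P : pred I) (F : I -> nat) x0 j :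
  j \in r -> P j -> \big[minn/x0]_(i <- r | P i) F i <= F j.
Proof.
elim: r => [|i r IHr] //=; rewrite inE big_cons => /predU1P[<- ->|jr Pj].
  exact: geq_minl.
by case: (P i); rewrite ?geq_min IHr ?orbT.
Qed.

Lemma bigmin_attained (I : Type) (r : seq I) (P : pred I) (F : I -> nat) x0 :
  let m := \big[minn/x0]_(i <- r | P i) F i in
  m = x0 \/ exists2 i, P i & m = F i.
Proof.
apply: (big_ind (fun y => y = x0 \/ exists2 i, P i & y = F i)) => [|x y Hx Hy|i Pi].
- by left.
- by rewrite /minn; case: ifP.
- by right; exists i.
Qed.

Section Bases.
Variables (D : finType) (M : structure D) (a : reach_assertion) (f : D -> nat).
Hypothesis f_pos : forall u, u \in vertD M a -> 0 < f u.

Let B := cI M (rB a).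

Lemma is_base_vertD : is_base M a (vertD M a).
Proof.
rewrite /is_base subxx; apply/forall_inP => v vV; apply/exists_inP.
by exists v; rewrite ?connect0.
Qed.

Lemma val_eq0 (X : {set D}) :
  X \subset vertD M a -> (Defs.val M a f X == 0) = (X \subset B).
Proof.
move=> XV; rewrite /Defs.val sum_nat_eq0; apply/forall_inP/subsetP => [f0 x xX|XB x].
  apply: contraT => xNB; have := f_pos (subsetP XV x xX).
  by rewrite (eqP (f0 x _)) // inE xNB.
by rewrite inE => /andP[xNB /XB xB]; rewrite xB in xNB.
Qed.

Lemma valD_leq (X : {set D}) : is_base M a X -> valD M a f <= Defs.val M a f X.
Proof. exact: bigmin_leq (mem_index_enum X). Qed.

Lemma valD_attained : exists2 X, is_base M a X & valD M a f = Defs.val M a f X.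
Proof.
rewrite /valD; have [->|[X]] := bigmin_attained (index_enum {set D})
  (is_base M a) (Defs.val M a f) (Defs.val M a f (vertD M a)).
- by exists (vertD M a); first exact: is_base_vertD.
- by exists X.
Qed.

Lemma connectedD_is_base : connectedD M a <-> is_base M a (vertD M a :&: B).
Proof.
rewrite /is_base subsetIl; split=> [conn | /forall_inP conn v vV].
  by apply/forall_inP => v /conn[b bVB bv]; apply/exists_inP; exists b.
by have /exists_inP[b] := conn v vV; exists b.
Qed.

Lemma connectedD_base_subset (X : {set D}) :
  is_base M a X -> X \subset B -> connectedD M a.
Proof.
case/andP=> XV /forall_inP conn XB v vV.
have /exists_inP[x xX xv] := conn v vV.
by exists x; rewrite // inE (subsetP XV) ?(subsetP XB).
Qed.

Lemma valD_eq0_connected : valD M a f = 0 <-> connectedD M a.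
Proof.
split=> [|conn].
  have [X baseX ->] := valD_attained; move/eqP.
  rewrite val_eq0; last by case/andP: baseX.
  exact: connectedD_base_subset.
have baseVB := iffLR connectedD_is_base conn.
apply/eqP; rewrite -leqn0 -(eqP (_ : Defs.val M a f (vertD M a :&: B) == 0)).
  exact: valD_leq.
by rewrite val_eq0 ?subsetIl ?subsetIr.
Qed.

End Bases.

Theorem lemma5 (NF : pred nat) (Phi : re_formula) (D : finType) (M : structure D)
    (h' : nat) (f : D -> nat) :
  wf_re_formula NF Phi ->
  respects_functional NF M ->
  h' < size (FRE Phi) ->
  useful_labeling M (Fphi Phi) (nth dummy_reach (FRE Phi) h') f ->
  valD M (nth dummy_reach (FRE Phi) h') f = 0 <->
  connectedD M (nth dummy_reach (FRE Phi) h').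
Proof.
move=> _ _ _ [f_range _].
apply: valD_eq0_connected => u /f_range.
by case/andP.
Qed.
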